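(* Let $m_1,m_2\in\{m_L,m_R\}$. Then both cutoff profiles $(\xi_L(m_1,m_2),\xi_L(m_2,m_1))$ and $(\xi_R(m_1,m_2),\xi_R(m_2,m_1))$ are strict equilibria and neighborhood invader strategy profiles of the induced game $\Gamma(F_{m_1},F_{m_2})$.
   Context: Two players; types drawn independently from a distribution on $[0,1]$ with continuous CDF $F$ and density $f>0$ on $[0,1]$; each chooses $L$ or $R$; a type-$u$ player gets $1-u$ if both choose $L$, $u$ if both choose $R$, $0$ otherwise. Players first send messages via the message function $\mu^*$: type $u$ sends $m_L$ if $u\le1/2$ and $m_R$ if $u>1/2$. $F_{m_L}$ is $F$ conditioned on $[0,1/2]$ and $F_{m_R}$ is $F$ conditioned on $(1/2,1]$. $\xi_L(m,m')=0$ if $m=m'=m_R$ and $1$ otherwise; $\xi_R(m,m')=1$ if $m=m'=m_L$ and $0$ otherwise. Induced game $\Gamma(F_{m_1},F_{m_2})$: player $i\in\{1,2\}$ has type drawn from $F_{m_i}$ (independently) and chooses a cutoff $x_i\in[0,1]$, playing $L$ iff her type $\le x_i$. $\pi^{m_1,m_2}(x_1,x_2)=\int[\mathbf 1\{u\le x_1\}(1-u)F_{m_2}(x_2)+\mathbf 1\{u>x_1\}u(1-F_{m_2}(x_2))]dF_{m_1}(u)$ is player 1's expected payoff; $\pi^{m_2,m_1}(x_2,x_1)$ is player 2's. Cutoffs $x_i,x_i'$ of player $i$ are equivalent ($x_i\approx x_i'$) if $F_{m_i}(x_i)=F_{m_i}(x_i')$. $(x_1,x_2)$ is a strict equilibrium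 if $\pi^{m_1,m_2}(x_1',x_2)\ge\pi^{m_1,m_2}(x_1,x_2)$ implies $x_1'\approx x_1$ and $\pi^{m_2,m_1}(x_2',x_1)\ge\pi^{m_2,m_1}(x_2,x_1)$ implies $x_2'\approx x_2$. A strict equilibrium $(x_1,x_2)$ is a neighborhood invader strategy profile if there exists $\epsilon>0$ such that for every $(x_1',x_2')$ with $x_1'\not\approx x_1$, $x_2'\not\approx x_2$, $|x_1'-x_1|<\epsilon$, $|x_2'-x_2|<\epsilon$, either $\pi^{m_1,m_2}(x_1,x_2')>\pi^{m_1,m_2}(x_1',x_2')$ or $\pi^{m_2,m_1}(x_2,x_1')>\pi^{m_2,m_1}(x_2',x_1')$. *)

From HB Require Import structures.
From mathcomp Require Import all_boot all_order all_algebra.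
From mathcomp Require Import all_classical all_reals all_analysis.
Set Implicit Arguments. Unset Strict Implicit. Unset Printing Implicit Defensive.
Import Order.TTheory GRing.Theory Num.Theory.
Local Open Scope classical_set_scope.
Local Open Scope ring_scope.

Inductive msg := mL | mR.

Definition msg_eqb (a b : msg) : bool :=
  match a, b with mL, mL | mR, mR => true | _, _ => false end.

Section Game.
Variable R : realType.

Definition leb_meas := (@lebesgue_measure R).

Definition is_pos_density (f : R -> R) : Prop :=
  [/\ leb_meas.-integrable `[0%R, 1%R] (EFin \o f),
      (forall x, 0 <= x <= 1 -> 0 < f x) &
      Rintegral leb_meas `[0%R, 1%R] f = 1].

(* Support of the conditional type distribution after message m. *)
Definition msupp (m : msg) : set R :=
  match m with
  | mL => `[0%R, 2^-1]
  | mR => `]2^-1, 1%R]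
  end.

Definition Fm (f : R -> R) (m : msg) (x : R) : R :=
  Rintegral leb_meas (msupp m `&` `]-oo, x]) f / Rintegral leb_meas (msupp m) f.

(* pi^{m1,m2}(x1,x2): expected payoff of a player with message m1 using cutoff
   x1 against an opponent with message m2 using cutoff x2; the integral
   against dF_{m1} is written through the density f / F(msupp m1). *)
Definition payoff (f : R -> R) (m1 m2 : msg) (x1 x2 : R) : R :=
  Rintegral leb_meas (msupp m1)
    (fun u => (if u <= x1 then (1 - u) * Fm f m2 x2
               else u * (1 - Fm f m2 x2)) * f u)
  / Rintegral leb_meas (msupp m1) f.

Definition cutoff_equiv (f : R -> R) (m : msg) (x x' : R) : Prop :=
  Fm f m x = Fm f m x'.

Definition in01 (x : R) : Prop := 0 <= x <= 1.

Definition strict_eq (f : R -> R) (m1 m2 : msg) (x1 x2 : R) : Prop :=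
  [/\ in01 x1, in01 x2,
      (forall x1', in01 x1' -> payoff f m1 m2 x1' x2 >= payoff f m1 m2 x1 x2 ->
                   cutoff_equiv f m1 x1' x1) &
      (forall x2', in01 x2' -> payoff f m2 m1 x2' x1 >= payoff f m2 m1 x2 x1 ->
                   cutoff_equiv f m2 x2' x2)].

Definition nis_profile (f : R -> R) (m1 m2 : msg) (x1 x2 : R) : Prop :=
  strict_eq f m1 m2 x1 x2 /\
  exists eps : R, 0 < eps /\
    forall x1' x2', in01 x1' -> in01 x2' ->
      ~ cutoff_equiv f m1 x1' x1 -> ~ cutoff_equiv f m2 x2' x2 ->
      `|x1' - x1| < eps -> `|x2' - x2| < eps ->
      payoff f m1 m2 x1 x2' > payoff f m1 m2 x1' x2' \/
      payoff f m2 m1 x2 x1' > payoff f m2 m1 x2' x1'.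

End Game.

Definition xiL (R : realType) (m m' : msg) : R :=
  match m, m' with mR, mR => 0 | _, _ => 1 end.
Definition xiR (R : realType) (m m' : msg) : R :=
  match m, m' with mL, mL => 1 | _, _ => 0 end.

From HB Require Import structures.
From mathcomp Require Import all_boot all_order all_algebra.
From mathcomp Require Import all_classical all_reals all_analysis.
From mathcomp Require Import lra.
Set Implicit Arguments. Unset Strict Implicit. Unset Printing Implicit Defensive.
Import Order.TTheory GRing.Theory Num.Theory.
Local Open Scope classical_set_scope.
Local Open Scope ring_scope.

(* Both profiles in the theorem are either (1, 1) ("everybody plays L") or
   (0, 0) ("everybody plays R"), so it suffices to show:
   - (1, 1) and (0, 0) are strict equilibria for every pair of messages.  Against
     an opponent who surely plays L (F_{m'}(1) = 1) the cutoff 1 pays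
     (1 - u) f(u) to every type u; any cutoff x' < hi(m) loses this on the
     non-null interval ]max x' lo(m), hi(m)[ of the support, so it is strictly
     worse, whereas any x' >= hi(m) is equivalent to 1.  The case of (0, 0)
     is symmetric.  Strictness rests on one measure-theoretic fact: a function
     positive on a non-degenerate open interval has a positive integral there.
   - They are neighborhood invader profiles as soon as one player has a locally
     constant equivalence class of cutoffs: for m_L every cutoff in ]1/2, 1] is
     equivalent to 1, for m_R every cutoff in [0, 1/2] is equivalent to 0, so
     no admissible invader exists near the profile.  For (1, 1) some message
     is m_L and for (0, 0) some message is m_R, exactly as xi_L and xi_R say.
   The file proves the positivity fact first, then elementary facts on the
   message supports, then (for a fixed density) the constancy properties of
   F_m, a comparison principle for payoffs, the two best-reply lemmas, the
   strict equilibria and invader properties, and finally the theorem. *)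

Section PositiveIntegral.
Variable R : realType.
Notation mu := (@lebesgue_measure R).

(* A measurable function that is positive on a non-empty open interval has a
   positive Lebesgue integral on it: otherwise it would vanish almost
   everywhere there, and the interval would be null. *)
Lemma integral_itv_gt0 (h : R -> R) (a b : R) : a < b ->
  measurable_fun (`]a, b[ : set (measurableTypeR R)) h ->
  (forall u, a < u < b -> 0 < h u) ->
  (0 < \int[mu]_(x in `]a, b[) (h x)%:E)%E.
Proof.
move=> ab mh hpos; have mI : measurable (`]a, b[ : set R) by [].
have hge0 (x : R) : [set` `]a, b[] x -> (0 <= (h x)%:E)%E.
  by rewrite /= in_itv /= lee_fin => /hpos/ltW.
rewrite lt0e integral_ge0 // andbT; apply/eqP => int0.
have mh' := (measurable_realfun.measurable_EFinP _ _).2 mh.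
have abs0 : (\int[mu]_(x in `]a, b[) `|(EFin \o h) x| = 0)%E.
  by rewrite -int0; apply: eq_integral => x /set_mem xI; rewrite gee0_abs ?hge0.
have [N [mN N0 sN]] := (ae_eq_integral_abs mu mI mh').1 abs0.
have : (mu `]a, b[ <= mu N)%E.
  apply: le_measure; rewrite ?inE //= => x xI; apply: sN => /= /(_ xI) [].
  by apply/eqP; rewrite gt_eqF // hpos //; move: xI; rewrite /= in_itv.
by rewrite N0 lebesgue_measure_itv /= lte_fin ab lee_fin subr_le0 leNgt ab.
Qed.

Lemma Rintegral_gt0 (A : set (measurableTypeR R)) (h : R -> R) (a b : R) :
  measurable A ->
  mu.-integrable A (EFin \o h) -> (forall u, A u -> 0 <= h u) ->
  a < b -> `]a, b[ `<=` A -> (forall u, a < u < b -> 0 < h u) ->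
  0 < Rintegral mu A h.
Proof.
move=> mA ih hge0 ab sA hpos; apply: fine_gt0.
have mh : measurable_fun A h.
  by apply/measurable_realfun.measurable_EFinP; exact: measurable_int ih.
have /fin_numPlt/andP[_ ->] := integrable_fin_num mA ih; rewrite andbT.
apply: (lt_le_trans (integral_itv_gt0 ab (measurable_funS mA sA mh) hpos)).
apply: ge0_subset_integral => //; exact/measurable_realfun.measurable_EFinP.
Qed.

End PositiveIntegral.

Section Messages.
Context {R : realType}.

Definition lo (m : msg) : R := if m is mL then 0 else 2^-1.
Definition hi (m : msg) : R := if m is mL then 2^-1 else 1.

Lemma half_bounds : 0 < (2^-1 : R) < 1.
Proof. by rewrite invr_gt0 ltr0n /= invf_lt1 ?ltr0n // ltr1n. Qed.

Lemma lo_lt_hi m : lo m < hi m.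
Proof. by have [h0 h1] := andP half_bounds; case: m => /=; lra. Qed.

Lemma lo_ge0 m : 0 <= lo m.
Proof. by have [h0 h1] := andP half_bounds; case: m => /=; lra. Qed.

Lemma hi_le1 m : hi m <= 1.
Proof. by have [h0 h1] := andP half_bounds; case: m => /=; lra. Qed.

Lemma msupp_bounds m u : msupp m u -> lo m <= u <= hi m.
Proof.
have [h0 h1] := andP half_bounds.
by case: m; rewrite /= in_itv /= => /andP[a b]; apply/andP; split; lra.
Qed.

Lemma msupp_sub01 m : @msupp R m `<=` `[0, 1].
Proof.
move=> u /msupp_bounds /andP[a b]; rewrite /= in_itv /=.
by rewrite (le_trans (lo_ge0 m) a) (le_trans b (hi_le1 m)).
Qed.

Lemma itv_sub_msupp m : `]lo m, hi m[ `<=` @msupp R m.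
Proof.
have [h0 h1] := andP half_bounds.
by case: m => u /=; rewrite !in_itv /= => /andP[a b]; apply/andP; split; lra.
Qed.

Lemma measurable_msupp m : measurable (@msupp R m : set (measurableTypeR R)).
Proof. by case: m => /=; exact: measurable_itv. Qed.

End Messages.

Section InducedGame.
Variable R : realType.
Notation mu := (@lebesgue_measure R).
Variable f : R -> R.
Hypothesis hf : is_pos_density f.

Lemma density_gt0 u : 0 <= u <= 1 -> 0 < f u.
Proof. by case: hf => _ fpos _; exact: fpos. Qed.

Lemma density_ge0 m u : msupp m u -> 0 <= f u.
Proof.
by move=> /msupp_sub01; rewrite /= in_itv /= => /density_gt0/ltW.
Qed.

Lemma integrable_density m : mu.-integrable (@msupp R m) (EFin \o f).
Proof.
case: hf => fint _ _; apply: integrableS fint => //.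
- exact: measurable_msupp.
- exact: msupp_sub01.
Qed.

Lemma measurable_density m :
  measurable_fun (@msupp R m : set (measurableTypeR R)) f.
Proof.
apply/measurable_realfun.measurable_EFinP.
exact: measurable_int (integrable_density m).
Qed.

(* Every message is sent with positive probability, so F_m is well defined. *)
Lemma msupp_mass_gt0 m : 0 < Rintegral mu (msupp m) f.
Proof.
apply: (Rintegral_gt0 (measurable_msupp m) (integrable_density m)).
- exact: density_ge0.
- exact: lo_lt_hi.
- exact: itv_sub_msupp.
- by move=> u /(@itv_sub_msupp R m u)/msupp_sub01; rewrite /= in_itv /=;
    exact: density_gt0.
Qed.

Lemma Fm_ge_hi m x : hi m <= x -> Fm f m x = Fm f m 1.
Proof.
move=> hix; rewrite /Fm; congr (Rintegral _ _ _ / _).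
apply/seteqP; split => u [um _]; split => //; rewrite /= in_itv /=;
  have /andP[_ uhi] := msupp_bounds um.
- exact: le_trans uhi (hi_le1 m).
- exact: le_trans uhi hix.
Qed.

Lemma Fm_le_lo m x : 0 <= x <= lo m -> Fm f m x = Fm f m 0.
Proof.
case: m => /= /andP[x0 xlo]; first by have -> : x = 0 by apply/le_anti/andP.
rewrite /Fm; congr (Rintegral _ _ _ / _).
apply/seteqP; split => u [/=]; rewrite !in_itv /= => /andP[a b] c; lra.
Qed.

Lemma Fm1 m : Fm f m 1 = 1.
Proof.
rewrite /Fm setIidl ?divff ?gt_eqF ?msupp_mass_gt0 //.
move=> u /msupp_bounds /andP[_ uhi]; rewrite /= in_itv /=.
exact: le_trans uhi (hi_le1 m).
Qed.

Lemma Fm0 m : Fm f m 0 = 0.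
Proof.
have [h0 h1] := andP (@half_bounds R).
rewrite /Fm; case: m.
  have -> : @msupp R mL `&` `]-oo, 0] = [set 0].
    apply/seteqP; split => u /=; rewrite !in_itv /=; last by move=> ->; lra.
    by move=> -[/andP[a _] b]; apply/le_anti/andP.
  by rewrite Rintegral_set1 mul0r.
have -> : @msupp R mR `&` `]-oo, 0] = set0.
  by apply/seteqP; split => u //=; rewrite !in_itv /= => -[/andP[a _] b]; lra.
by rewrite Rintegral_set0 mul0r.
Qed.

(* Density-weighted payoff of a type-u player using cutoff x against an
   opponent who plays L with probability q: payoff f m m' x y is the integral
   of payoff_density (Fm f m' y) x over msupp m, normalized by its mass. *)
Definition payoff_density (q x u : R) : R :=
  (if u <= x then (1 - u) * q else u * (1 - q)) * f u.

Lemma measurable_payoff_density m q x :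
  measurable_fun (@msupp R m : set (measurableTypeR R)) (payoff_density q x).
Proof.
apply: measurable_realfun.measurable_funM; last exact: measurable_density.
apply: (measurable_funS measurableT) => //.
apply: measurable_fun_ifT.
- exact: measurable_realfun.measurable_fun_ler.
- by apply: measurable_realfun.measurable_funM => //;
    exact: measurable_realfun.measurable_funB.
- exact: measurable_realfun.measurable_funM.
Qed.

(* For a probability q the weight in front of f u lies in [0, 1], so the
   payoff density is dominated by the integrable density f. *)
Lemma integrable_payoff_density m q x : 0 <= q <= 1 ->
  mu.-integrable (@msupp R m) (EFin \o payoff_density q x).
Proof.
move=> /andP[q0 q1]; have mS := @measurable_msupp R m.
apply: le_integrable; last exact: integrable_density m.
- exact: mS.
- apply/measurable_realfun.measurable_EFinP; exact: measurable_payoff_density.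
move=> u Su; have /msupp_sub01 := Su; rewrite /= in_itv /= => /andP[u0 u1].
rewrite lee_fin /payoff_density normrM ler_piMl //.
by case: ifP => _; rewrite ger0_norm; nra.
Qed.

Lemma payoff_lt m m' y q x x' a b : Fm f m' y = q -> 0 <= q <= 1 ->
  a < b -> `]a, b[ `<=` msupp m ->
  (forall u, msupp m u -> payoff_density q x' u <= payoff_density q x u) ->
  (forall u, a < u < b -> payoff_density q x' u < payoff_density q x u) ->
  payoff f m m' x' y < payoff f m m' x y.
Proof.
move=> hq q01 ab sab le_supp lt_itv; have mS := @measurable_msupp R m.
have ix := integrable_payoff_density m x q01.
have ix' := integrable_payoff_density m x' q01.
rewrite /payoff hq ltr_pM2r ?invr_gt0 ?msupp_mass_gt0 // -subr_gt0.
rewrite -(RintegralB mS ix ix').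
apply: (Rintegral_gt0 mS _ _ ab sab) => [|u Su|u abu].
- apply: eq_integrable mS _ _ _ (integrableB mS ix ix').
  by move=> u _ /=; rewrite EFinB.
- by rewrite subr_ge0 le_supp.
- by rewrite subr_gt0 lt_itv.
Qed.

Lemma payoff_density_vs_L x u :
  payoff_density 1 x u = if u <= x then (1 - u) * f u else 0.
Proof. by rewrite /payoff_density; case: ifP; rewrite ?mulr1 ?subrr ?mulr0 ?mul0r. Qed.

Lemma payoff_density_vs_R x u :
  payoff_density 0 x u = if u <= x then 0 else u * f u.
Proof. by rewrite /payoff_density; case: ifP; rewrite ?mulr0 ?subr0 ?mulr1 ?mul0r. Qed.

(* Against an opponent who surely plays L, every best reply is equivalent to
   the cutoff 1: a cutoff x' < hi m forgoes (1 - u) f(u) > 0 on ]x', hi m[. *)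
Lemma best_reply_to_L m m' y x' : Fm f m' y = 1 -> in01 x' ->
  payoff f m m' 1 y <= payoff f m m' x' y -> cutoff_equiv f m x' 1.
Proof.
move=> hq /andP[x0 x1] better; have [hix'|x'hi] := lerP (hi m) x'.
  exact: Fm_ge_hi.
suff : payoff f m m' x' y < payoff f m m' 1 y by rewrite ltNge better.
have h1 := @hi_le1 R m; have l0 := @lo_ge0 R m.
apply: (payoff_lt (a := Num.max x' (lo m)) (b := hi m) hq).
- by rewrite ler01 lexx.
- by rewrite gt_max x'hi lo_lt_hi.
- move=> u; rewrite /= in_itv /= gt_max => /andP[/andP[_ lou] uhi].
  by apply: itv_sub_msupp; rewrite /= in_itv /= lou uhi.
- move=> u Su; have /andP[lou uhi] := msupp_bounds Su; have := density_ge0 Su.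
  rewrite !payoff_density_vs_L (_ : u <= 1); last exact: le_trans uhi h1.
  by case: ifP => _; nra.
- move=> u; rewrite gt_max => /andP[/andP[x'u lou] uhi].
  have fu : 0 < f u by apply: density_gt0; apply/andP; split; lra.
  rewrite !payoff_density_vs_L ifF ?ifT; [nra|lra|].
  by apply/negbTE; rewrite -ltNge.
Qed.

(* Symmetrically, against an opponent who surely plays R every best reply is
   equivalent to the cutoff 0: a cutoff x' > lo m forgoes u f(u) > 0 on
   ]lo m, x'[. *)
Lemma best_reply_to_R m m' y x' : Fm f m' y = 0 -> in01 x' ->
  payoff f m m' 0 y <= payoff f m m' x' y -> cutoff_equiv f m x' 0.
Proof.
move=> hq /andP[x0 x1] better; have [x'lo|lox'] := lerP x' (lo m).
  by apply: Fm_le_lo; rewrite x0 x'lo.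
suff : payoff f m m' x' y < payoff f m m' 0 y by rewrite ltNge better.
have h1 := @hi_le1 R m; have l0 := @lo_ge0 R m.
apply: (payoff_lt (a := lo m) (b := Num.min x' (hi m)) hq).
- by rewrite lexx ler01.
- by rewrite lt_min lox' lo_lt_hi.
- move=> u; rewrite /= in_itv /= lt_min => /andP[lou /andP[_ uhi]].
  by apply: itv_sub_msupp; rewrite /= in_itv /= lou uhi.
- move=> u Su; have /andP[lou uhi] := msupp_bounds Su; have := density_ge0 Su.
  by rewrite !payoff_density_vs_R; case: ifPn => ?; case: ifPn => ?; nra.
- move=> u; rewrite lt_min => /andP[lou /andP[ux' uhi]].
  have fu : 0 < f u by apply: density_gt0; apply/andP; split; lra.
  rewrite !payoff_density_vs_R ifT ?ifF; [nra| |lra].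
  by apply/negbTE; rewrite -ltNge; lra.
Qed.

Lemma in01_0 : in01 (0 : R). Proof. by rewrite /in01 lexx ler01. Qed.
Lemma in01_1 : in01 (1 : R). Proof. by rewrite /in01 lexx ler01. Qed.

Lemma strict_eq_all_L m1 m2 : strict_eq f m1 m2 1 1.
Proof.
split; [exact: in01_1|exact: in01_1|move=> x|move=> x];
  exact: best_reply_to_L (Fm1 _).
Qed.

Lemma strict_eq_all_R m1 m2 : strict_eq f m1 m2 0 0.
Proof.
split; [exact: in01_0|exact: in01_0|move=> x|move=> x];
  exact: best_reply_to_R (Fm0 _).
Qed.

(* A strict equilibrium is a neighborhood invader profile as soon as one
   player has no non-equivalent cutoff near her equilibrium cutoff: then no
   admissible invader exists at all. *)
Lemma nis_of_locally_equiv m1 m2 x1 x2 eps :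
  strict_eq f m1 m2 x1 x2 -> 0 < eps ->
  (forall x1', in01 x1' -> `|x1' - x1| < eps -> cutoff_equiv f m1 x1' x1) \/
  (forall x2', in01 x2' -> `|x2' - x2| < eps -> cutoff_equiv f m2 x2' x2) ->
  nis_profile f m1 m2 x1 x2.
Proof.
move=> se eps0 loc; split => //; exists eps; split => // x1' x2' h1 h2 n1 n2 d1 d2.
by exfalso; case: loc => loc; [exact/n1/loc|exact/n2/loc].
Qed.

Lemma mL_equiv_near1 x : in01 x -> `|x - 1| < 2^-1 -> cutoff_equiv f mL x 1.
Proof.
move=> /andP[x0 x1]; rewrite ltr_norml => /andP[lb ub].
by apply: Fm_ge_hi => /=; lra.
Qed.

Lemma mR_equiv_near0 x : in01 x -> `|x - 0| < 2^-1 -> cutoff_equiv f mR x 0.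
Proof.
move=> /andP[x0 x1]; rewrite ltr_norml => /andP[lb ub].
by apply: Fm_le_lo => /=; apply/andP; split; lra.
Qed.

Lemma nis_all_L m1 m2 : m1 = mL \/ m2 = mL -> nis_profile f m1 m2 1 1.
Proof.
move=> hm; apply: (nis_of_locally_equiv (eps := 2^-1) (strict_eq_all_L m1 m2)).
  by have /andP[] := @half_bounds R.
by case: hm => ->; [left|right]; exact: mL_equiv_near1.
Qed.

Lemma nis_all_R m1 m2 : m1 = mR \/ m2 = mR -> nis_profile f m1 m2 0 0.
Proof.
move=> hm; apply: (nis_of_locally_equiv (eps := 2^-1) (strict_eq_all_R m1 m2)).
  by have /andP[] := @half_bounds R.
by case: hm => ->; [left|right]; exact: mR_equiv_near0.
Qed.

End InducedGame.

Theorem mainTheorem13 (R : realType) (f : R -> R) (hf : is_pos_density f)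
  (m1 m2 : msg) :
  (strict_eq f m1 m2 (xiL R m1 m2) (xiL R m2 m1) /\
   nis_profile f m1 m2 (xiL R m1 m2) (xiL R m2 m1)) /\
  (strict_eq f m1 m2 (xiR R m1 m2) (xiR R m2 m1) /\
   nis_profile f m1 m2 (xiR R m1 m2) (xiR R m2 m1)).
Proof.
case: m1; case: m2 => /=; split; split;
  solve [ exact: strict_eq_all_L | exact: strict_eq_all_R
        | apply: nis_all_L => //; by [left|right]
        | apply: nis_all_R => //; by [left|right] ].
Qed.
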